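(* Let $G$ be a bipartite graph and $M$ a matching of $G$. Let $C$ be an $M$-cycle of $G$ and let $P = P[x,y]$ be an $M$-path in $G - V(C)$. Put $n = |C|/2$ and assume that $e_G(\{x,y\}, V(C)) > n$. Then for each $i$ with $1 \le i \le n$, the induced subgraph $G[V(P)\cup V(C)]$ contains an $M$-cycle of length $|P| + 2i$.
   Context: Graphs are finite and simple. A cycle $C$ is an $M$-cycle if $|E(C)\cap M|=|C|/2$. An $M$-path $P[x,y]$ is a path with ends $x$ and $y$ whose edges alternate between edges of $M$ and edges not in $M$, beginning and ending with edges of $M$. $|P|$ and $|C|$ denote numbers of vertices. For disjoint vertex sets $S,T$, $e_G(S,T)$ is the number of edges of $G$ between $S$ and $T$. *)

From mathcomp Require Import all_boot.
Set Implicit Arguments. Unset Strict Implicit. Unset Printing Implicit Defensive.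

Section Defs.
Variable T : finType.

Definition simple_graph (e : rel T) : Prop :=
  symmetric e /\ irreflexive e.

Definition bipartite (e : rel T) : Prop :=
  exists f : T -> bool, forall u v, e u v -> f u != f v.

Definition matching (e m : rel T) : Prop :=
  [/\ symmetric m, (forall u v, m u v -> e u v) &
      (forall u v w, m u v -> m u w -> v = w)].

Definition is_cycle (e : rel T) (c : seq T) : bool :=
  [&& uniq c, 3 <= size c & cycle e c].

(* |E(C) ∩ M| = |C|/2 ; edges of C are {x, next c x}, x in c *)
Definition M_cycle (e m : rel T) (c : seq T) : bool :=
  is_cycle e c && (count (fun x => m x (next c x)) c == (size c)./2).

(* p lists the vertices of an M-path P[x,y] from x to y: a path whose
   edges alternate between M and non-M, first and last edge in M. *)
Definition M_path (e m : rel T) (x y : T) (p : seq T) : bool :=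
  [&& 2 <= size p, head x p == x, last x p == y, uniq p, ~~ odd (size p) &
      all (fun i => e (nth x p i) (nth x p i.+1) &&
                    (m (nth x p i) (nth x p i.+1) == ~~ odd i))
          (iota 0 (size p).-1)].

(* e_G({x,y}, S) for x != y, S given as duplicate-free list *)
Definition e_between2 (e : rel T) (x y : T) (s : seq T) : nat :=
  count (e x) s + count (e y) s.

End Defs.

From mathcomp Require Import all_boot zify.
Set Implicit Arguments. Unset Strict Implicit. Unset Printing Implicit Defensive.

(* Since M is a matching, the M-edges of C alternate around C, so C can be
   enumerated as c_0, c_1, ... (indices mod 2n) with c_k c_(k+1) in M exactly
   for even k.  In a bipartite graph the ends x, y of the odd-length path P
   have different colours, so after possibly reversing P, x is adjacent only
   to vertices c_k with k even and y only to those with k odd.  More than n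
   edges between {x, y} and C then force, by pigeonhole over the n pairs
   (c_(2j), c_(2j+2i-1)), some j with x ~ c_(2j) and y ~ c_(2j+2i-1).  The cycle
   x P y c_(2j+2i-1) c_(2j+2i-2) ... c_(2j) x is the required M-cycle: its two
   connecting edges are not in M because x and y are already matched in P. *)

Lemma sum_periodic_shift (h : nat -> nat) N r : (forall k, h (k + N) = h k) ->
  \sum_(0 <= k < N) h (k + r) = \sum_(0 <= k < N) h k.
Proof.
case: N => [|N] hN; first by rewrite !big_geq.
elim: r => [|r IHr]; first by under eq_bigr do rewrite addn0.
have hNr : h (N + r.+1) = h r by rewrite addnS -addSn addnC hN.
rewrite -IHr big_nat_recr // big_nat_recl //= add0n hNr addnC.
by under [in RHS]eq_bigr do rewrite addSn -addnS.
Qed.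

Lemma sum_pairs (g : nat -> nat) n :
  \sum_(0 <= k < n.*2) g k = \sum_(0 <= j < n) (g j.*2 + g j.*2.+1).
Proof.
elim: n => [|n IHn]; first by rewrite !big_geq.
by rewrite doubleS !big_nat_recr //= IHn addnA.
Qed.

Lemma sum_le1_eq (t : nat -> nat) n : (forall k, t k <= 1) ->
  \sum_(0 <= k < n) t k = n -> forall k, k < n -> t k = 1.
Proof.
move=> t_le1 sum_t.
have : \sum_(0 <= k < n) (1 - t k) == 0.
  by rewrite sumnB // sum_nat_const_nat sum_t muln1 subn0 subnn.
rewrite sum_nat_seq_eq0 => /allP t_eq1 k lt_kn.
by have := t_eq1 k; rewrite mem_index_iota lt_kn => /(_ isT); have := t_le1 k; lia.
Qed.

Lemma sum_bool_pigeon (a b : nat -> bool) n :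
  n < \sum_(0 <= j < n) (a j + b j) -> exists2 j, j < n & a j && b j.
Proof.
move=> sum_gt; have /existsP[[j lt_jn] ab_j] : [exists j : 'I_n, a j && b j].
  apply: contraLR sum_gt; rewrite negb_exists -leqNgt => /forallP no_j.
  rewrite -[leqRHS]muln1 -[n in n * 1]subn0 -sum_nat_const_nat.
  rewrite big_nat_cond [leqRHS]big_nat_cond.
  apply: leq_sum => j /andP[/andP[_ lt_jn] _].
  by case: (a j) (b j) (no_j (Ordinal lt_jn)) => [] [].
by exists j.
Qed.

Lemma sparse_periodic_alternates (b : nat -> bool) N :
  0 < N -> ~~ odd N -> (forall k, b (k %% N) = b k) ->
  (forall k, ~~ (b k && b k.+1)) -> \sum_(0 <= k < N) b k = N./2 ->
  forall k, b k.+1 = ~~ b k.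
Proof.
move=> N_gt0 evN bmod sparse sum_b k.
have pair_le1 j : b j + b j.+1 <= 1 by case: (b j) (b j.+1) (sparse j) => [] [].
have shift : \sum_(0 <= j < N) b j.+1 = \sum_(0 <= j < N) b j.
  rewrite -(@sum_periodic_shift (fun j => b j) N 1) => [|j].
    by apply: eq_bigr => j _; rewrite addn1.
  by rewrite -bmod modnDr bmod.
have pair_sum : \sum_(0 <= j < N) (b j + b j.+1) = N.
  by rewrite big_split /= shift sum_b addnn halfK (negbTE evN) subn0.
have := sum_le1_eq pair_le1 pair_sum (ltn_pmod k N_gt0).
have -> : b (k %% N).+1 = b k.+1 by rewrite -bmod -addn1 modnDml bmod addn1.
by rewrite bmod => /eqP; case: (b k) (b k.+1) => [] [].
Qed.

Lemma count_iota_sum (a : pred nat) n :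
  count a (iota 0 n) = \sum_(0 <= k < n) a k.
Proof. by rewrite -sum1_count big_mkcond /index_iota subn0. Qed.

Lemma count_even_iota n : count (fun k => ~~ odd k) (iota 0 n.*2) = n.
Proof.
rewrite count_iota_sum sum_pairs.
under eq_bigr do rewrite /= odd_double.
by rewrite sum_nat_const_nat subn0 muln1.
Qed.

Section CycleIndexing.
Variable T : eqType.

Lemma next_nth_uniq (s : seq T) x0 k : uniq s -> k < size s ->
  next s (nth x0 s k) = nth x0 s (k.+1 %% size s).
Proof.
case: s => [|z s] // s_uniq lt_ks; rewrite next_nth mem_nth // index_uniq //=.
case: (ltngtP k (size s)) => [lt_k_s||->]; last by rewrite modnn nth_default.
- by rewrite modn_small // (set_nth_default z).
- by rewrite ltnNge -ltnS lt_ks.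
Qed.

Lemma cycle_nthP (e : rel T) (s : seq T) x0 : uniq s ->
  reflect (forall k, k < size s -> e (nth x0 s k) (nth x0 s (k.+1 %% size s)))
          (cycle e s).
Proof.
move=> s_uniq; apply: (iffP idP) => [e_s k lt_ks | e_nth].
  by rewrite -next_nth_uniq //; apply: next_cycle e_s _; apply: mem_nth.
apply: cycle_from_next => // z z_s.
by rewrite -(nth_index x0 z_s) next_nth_uniq ?index_mem // e_nth ?index_mem.
Qed.

Lemma count_next_nth (r : rel T) (s : seq T) x0 : uniq s ->
  count (fun z => r z (next s z)) s =
  count (fun k => r (nth x0 s k) (nth x0 s (k.+1 %% size s))) (iota 0 (size s)).
Proof.
move=> s_uniq; rewrite -[X in count _ X](mkseq_nth x0 s) count_map.
by apply: eq_in_count => k; rewrite mem_iota add0n => lt_ks /=; rewrite next_nth_uniq.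
Qed.

End CycleIndexing.

Lemma coloring_along_walk (T : Type) (e : rel T) (f : T -> bool) (w : nat -> T) L :
  (forall u v, e u v -> f u != f v) -> (forall k, k.+1 < L -> e (w k) (w k.+1)) ->
  forall k, k < L -> f (w k) = f (w 0) (+) odd k.
Proof.
move=> f_proper e_w; elim=> [|k IHk] lt_kL; first by rewrite addbF.
move: (f_proper _ _ (e_w k lt_kL)); rewrite IHk 1?ltnW //=.
by case: (f (w 0)) (odd k) (f (w k.+1)) => [] [] [].
Qed.

Section MPathsAndCycles.
Variables (T : finType) (e m : rel T).
Hypotheses (m_sym : symmetric m) (m_partner : forall u v w, m u v -> m u w -> v = w).

Definition alt_edge (u v : T) (k : nat) := e u v && (m u v == ~~ odd k).

Lemma M_pathP x y p :
  reflect [/\ 2 <= size p, nth x p 0 = x /\ nth x p (size p).-1 = y, uniq p,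
              ~~ odd (size p) &
              forall k, k.+1 < size p -> alt_edge (nth x p k) (nth x p k.+1) k]
          (M_path e m x y p).
Proof.
rewrite /M_path nth0 nth_last.
apply: (iffP andP) => [[p2 /and5P[/eqP hx /eqP ly p_uniq ev_p /allP alt_p]] |
                       [p2 [hx ly] p_uniq ev_p alt_p]].
  by split=> // k lt_kp; apply: alt_p; rewrite mem_iota add0n ltn_predRL.
split=> //; rewrite hx ly p_uniq ev_p !eqxx /=.
by apply/allP => k; rewrite mem_iota add0n ltn_predRL => /andP[_ /alt_p].
Qed.

Lemma M_cycle_nth (s : seq T) x0 : uniq s -> 3 <= size s -> ~~ odd (size s) ->
  (forall k, k < size s -> alt_edge (nth x0 s k) (nth x0 s (k.+1 %% size s)) k) ->
  M_cycle e m s.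
Proof.
move=> s_uniq s3 ev_s alt_s; rewrite /M_cycle /is_cycle s_uniq s3 /=.
apply/andP; split; first by apply/(cycle_nthP _ x0 s_uniq) => k /alt_s /andP[].
have size_s : size s = (size s)./2.*2 by rewrite halfK (negbTE ev_s) subn0.
rewrite (count_next_nth _ x0 s_uniq) {1}size_s -[X in _ == X]count_even_iota -size_s.
by apply/eqP/eq_in_count => k; rewrite mem_iota => /alt_s /andP[_ /eqP].
Qed.

Lemma M_path_rev x y p : symmetric e -> M_path e m x y p -> M_path e m y x (rev p).
Proof.
move=> e_sym /M_pathP[p2 [hx ly] p_uniq ev_p alt_p]; set L := size p in p2 ev_p alt_p ly.
have nth_revp k : k < L -> nth y (rev p) k = nth x p (L - k.+1).
  by move=> lt_kL; rewrite nth_rev // (set_nth_default x) // /L; lia.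
apply/M_pathP; rewrite size_rev rev_uniq -/L; split=> //.
  rewrite !nth_revp ?subn1 ?prednK ?subnn //; lia.
move=> k lt_kL; rewrite !nth_revp; try lia.
have -> : L - k.+1 = (L - k.+2).+1 by lia.
have := alt_p (L - k.+2); rewrite /alt_edge e_sym m_sym.
have -> : odd (L - k.+2) = odd k.
  have L_eq : L = L - k.+2 + k + 2 by lia.
  by move: ev_p; rewrite {1}L_eq !oddD /=; case: (odd _) (odd k) => [] [].
by apply; lia.
Qed.

Lemma M_path_ends_unmatched x y p z :
  M_path e m x y p -> z \notin p -> ~~ m x z /\ ~~ m y z.
Proof.
case/M_pathP=> p2 [hx ly] _ ev_p alt_p z_p.
have z_nth k : k < size p -> z != nth x p k.
  by move=> lt_kp; apply: contraNneq z_p => ->; apply: mem_nth.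
case: (size p) p2 ev_p alt_p z_nth ly => [|[|l]] // _ ev_l alt_p z_nth /= ly.
have /andP[_ /eqP m_x] := alt_p 0 isT; rewrite hx in m_x.
have /andP[_ /eqP] := alt_p l (ltnSn _); rewrite ly; move: ev_l => /= /negPn /negbTE -> m_y.
split; apply/negP => m_z.
  by have /eqP[] := z_nth 1 isT; apply: m_partner m_z m_x.
by have /eqP[] := z_nth l (ltnW (ltnSn _)); apply: m_partner m_z _; rewrite m_sym m_y.
Qed.

Lemma M_path_cat x y u v p q :
  M_path e m x y p -> M_path e m u v q -> [disjoint p & q] -> e y u ->
  M_path e m x v (p ++ q).
Proof.
move=> pP qP pq_disj e_yu.
have u_q : u \in q by case/M_pathP: qP => q2 [<- _] _ _ _; apply: mem_nth; lia.
have [_ m_yu] := M_path_ends_unmatched pP (negbT (disjointFl pq_disj u_q)).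
case/M_pathP: pP => p2 [hx ly] p_uniq ev_p alt_p.
case/M_pathP: qP => q2 [hu lv] q_uniq ev_q alt_q.
set L := size p in p2 ly ev_p alt_p; set L' := size q in q2 lv ev_q alt_q.
have nth_p k : k < L -> nth x (p ++ q) k = nth x p k by move=> lt_kL; rewrite nth_cat lt_kL.
have nth_q k : k < L' -> nth x (p ++ q) (L + k) = nth u q k.
  by move=> lt_kL'; rewrite nth_cat ltnNge leq_addr addKn /= (set_nth_default u).
apply/M_pathP; rewrite size_cat -/L -/L' cat_uniq p_uniq q_uniq oddD (negbTE ev_p) ev_q /=.
split=> //; first lia.
- split; first by rewrite nth_p //; lia.
  by rewrite -lv -nth_q; [congr nth; lia | lia].
- by rewrite andbT -disjoint_has disjoint_sym.
move=> k lt_k1.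
have [lt_k1L | lt_Lk1 | eq_k1L] := ltngtP k.+1 L.
- by rewrite !nth_p //; [apply: alt_p | apply: ltnW].
- have -> : k = L + (k - L) by lia.
  rewrite -addnS !nth_q; try lia.
  by rewrite /alt_edge oddD (negbTE ev_p); apply: alt_q; lia.
rewrite eq_k1L -[L]addn0 nth_q ?addn0 ?nth_p; try lia.
have k_eq : k = L.-1 by lia.
rewrite {1}k_eq ly hu /alt_edge e_yu (negbTE m_yu).
by move: ev_p; rewrite -eq_k1L /= negbK => ->.
Qed.

Lemma M_cycle_of_M_path x v s :
  M_path e m x v s -> e v x -> ~~ m v x -> M_cycle e m s.
Proof.
case/M_pathP=> s2 [hx lv] s_uniq ev_s alt_s e_vx m_vx.
apply: (M_cycle_nth (x0 := x)) => // [|k lt_ks].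
  (* On two vertices the closing edge would be the M-edge of the path. *)
  rewrite ltn_neqAle s2 andbT; apply: contra m_vx => /eqP s_2.
  have /andP[_ /eqP] := alt_s 0 s2.
  by rewrite hx -[1]/(2.-1) s_2 lv m_sym => ->.
have [lt_k1s | eq_k1s] : k.+1 < size s \/ k.+1 = size s by lia.
  by rewrite modn_small //; apply: alt_s.
have k_eq : k = (size s).-1 by lia.
rewrite eq_k1s modnn {1}k_eq lv hx /alt_edge e_vx (negbTE m_vx).
by move: ev_s; rewrite -eq_k1s /= negbK => ->.
Qed.

End MPathsAndCycles.

Lemma M_path_end_colors (T : finType) (e m : rel T) (f : T -> bool) x y p :
  (forall u v, e u v -> f u != f v) -> M_path e m x y p -> f y = ~~ f x.
Proof.
move=> f_proper /M_pathP[p2 [hx ly] _ ev_p alt_p].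
have e_p k : k.+1 < size p -> e (nth x p k) (nth x p k.+1) by move=> /alt_p /andP[].
have lt_last : (size p).-1 < size p by rewrite ltn_predL ltnW.
have := coloring_along_walk f_proper e_p lt_last.
rewrite hx ly => ->; move: ev_p p2.
by case: (size p) => [|L] //= /negPn ->; rewrite addbT.
Qed.

Section MCycleEnumeration.
Variables (T : finType) (e m : rel T) (f : T -> bool) (c : seq T) (x0 : T).
Hypotheses (f_proper : forall u v, e u v -> f u != f v) (m_sym : symmetric m)
           (m_partner : forall u v w, m u v -> m u w -> v = w) (c_M : M_cycle e m c).

Local Notation N := (size c).

Definition cyc k := nth x0 c (k %% N).

Let c_uniq : uniq c. Proof. by case/andP: c_M => /and3P[]. Qed.
Let c3 : 3 <= N. Proof. by case/andP: c_M => /and3P[]. Qed.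
Let N_gt0 : 0 < N. Proof. exact: ltn_trans c3. Qed.

Lemma cyc_mod k : cyc (k %% N) = cyc k.
Proof. by rewrite /cyc modn_mod. Qed.

Lemma cyc_mod_succ k : cyc (k %% N).+1 = cyc k.+1.
Proof. by rewrite /cyc -addn1 modnDml addn1. Qed.

Lemma cyc_addN k : cyc (k + N) = cyc k.
Proof. by rewrite /cyc modnDr. Qed.

Lemma mem_cyc k : cyc k \in c.
Proof. by rewrite mem_nth ?ltn_pmod. Qed.

Lemma eq_cyc u v : (cyc u == cyc v) = (u == v %[mod N]).
Proof. by rewrite nth_uniq ?ltn_pmod. Qed.

Lemma cyc_edge k : e (cyc k) (cyc k.+1).
Proof.
case/andP: c_M => /and3P[_ _ /(cycle_nthP _ x0 c_uniq) e_c] _.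
by rewrite -cyc_mod_succ /cyc; apply: e_c; rewrite ltn_pmod.
Qed.

Lemma cyc_color k r : f (cyc (k + r)) = f (cyc r) (+) odd k.
Proof.
have := @coloring_along_walk _ e f (fun j => cyc (j + r)) k.+1 f_proper.
by apply=> // j _; apply: cyc_edge.
Qed.

Lemma even_size_M_cycle : ~~ odd N.
Proof.
have := cyc_color N 0; rewrite addn0 -{1}[N]add0n cyc_addN.
by case: (odd N) (f (cyc 0)) => [] [].
Qed.

Lemma count_cyc (a : pred T) r : count a c = \sum_(0 <= k < N) a (cyc (k + r)).
Proof.
rewrite (@sum_periodic_shift (fun k => a (cyc k))) => [|k]; last by rewrite cyc_addN.
rewrite -[X in count _ X](mkseq_nth x0 c) count_map count_iota_sum.
by apply: eq_big_nat => k /andP[_ lt_kN]; rewrite /cyc modn_small.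
Qed.

Lemma cyc_matching_alternates k :
  m (cyc k.+1) (cyc k.+2) = ~~ m (cyc k) (cyc k.+1).
Proof.
apply: (@sparse_periodic_alternates (fun j => m (cyc j) (cyc j.+1)) N) => //.
- exact: even_size_M_cycle.
- by move=> j; rewrite cyc_mod cyc_mod_succ.
- move=> j; apply/negP => /andP[m_j m_j1].
  have /eqP := m_partner (etrans (m_sym _ _) m_j) m_j1.
  by rewrite eq_cyc -[j.+2]addn2 -{1}[j]addn0 eqn_modDl mod0n modn_small.
case/andP: c_M => _ /eqP <-; rewrite (count_next_nth _ x0 c_uniq) count_iota_sum.
by apply: eq_big_nat => j /andP[_ lt_jN]; rewrite /cyc modn_small.
Qed.

Lemma cyc_matching_phase : exists r, forall k, m (cyc (k + r)) (cyc (k + r).+1) = ~~ odd k.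
Proof.
have [b0 m_odd] : exists b0, forall k, m (cyc k) (cyc k.+1) = b0 (+) odd k.
  exists (m (cyc 0) (cyc 1)); elim=> [|k IHk]; first by rewrite addbF.
  by rewrite cyc_matching_alternates IHk /= addbN.
exists (~~ b0) => k; rewrite m_odd oddD.
by case: b0 {m_odd}; rewrite /= ?addbT ?addbF ?negbK.
Qed.

Lemma cyc_adj_parity z k r : e z (cyc (k + r)) -> odd k = (f z == f (cyc r)).
Proof. by move/f_proper; rewrite cyc_color; case: (f z) (f (cyc r)) (odd k) => [] [] []. Qed.

Section Phase.
Variable r : nat.
Hypotheses (e_sym : symmetric e)
           (cyc_phase : forall k, m (cyc (k + r)) (cyc (k + r).+1) = ~~ odd k).

Local Notation C k := (cyc (k + r)).

Lemma cyc_window_inj a u v : u < N -> v < N -> C (a + u) = C (a + v) -> u = v.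
Proof.
move=> lt_uN lt_vN /eqP.
by rewrite eq_cyc (addnAC a u) (addnAC a v) eqn_modDl !modn_small // => /eqP.
Qed.

Lemma M_path_cyc_segment a i : ~~ odd a -> 0 < i -> i.*2 <= N ->
  M_path e m (C (a + i.*2.-1)) (C a) (mkseq (fun s => C (a + (i.*2.-1 - s))) i.*2).
Proof.
move=> ev_a i_gt0 le_iN; apply/M_pathP; rewrite size_mkseq odd_double.
split=> //; first lia.
- by rewrite !nth_mkseq ?subn0 ?subnn ?addn0 //; lia.
- apply/mkseq_uniqP => s t; rewrite !inE => lt_s lt_t /cyc_window_inj.
  by move=> /(_ ltac:(lia) ltac:(lia)); lia.
move=> k lt_k1; rewrite !nth_mkseq; try lia.
have -> : a + (i.*2.-1 - k) = (a + (i.*2.-1 - k.+1)).+1 by lia.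
have odd_k : odd (a + (i.*2.-1 - k.+1)) = odd k.
  have /(congr1 odd) : a + (i.*2.-1 - k.+1) + k = a + (i.-1).*2 by lia.
  by rewrite !oddD odd_double (negbTE ev_a) /= => /negbT; rewrite negb_add => /eqP.
by rewrite /alt_edge -addSn e_sym m_sym cyc_edge cyc_phase odd_k eqxx.
Qed.

Lemma cyc_neighbours_at_odd_distance x y i :
  (forall k, e x (C k) -> ~~ odd k) -> (forall k, e y (C k) -> odd k) ->
  N./2 < count (e x) c + count (e y) c -> 0 < i ->
  exists2 j, j < N./2 & e x (C j.*2) && e y (C (j.*2 + i.*2.-1)).
Proof.
move=> x_even y_odd.
have N_eq : N = N./2.*2 by rewrite halfK (negbTE even_size_M_cycle) subn0.
set n := N./2 in N_eq *.
have ex_odd j : e x (C j.*2.+1) = false.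
  by apply: contraTF (x_even j.*2.+1) _; rewrite /= odd_double.
have ey_even j : e y (C j.*2) = false.
  by apply: contraNF (y_odd j.*2) _; rewrite odd_double.
move=> cnt i_gt0; apply: sum_bool_pigeon.
have shift_y : \sum_(0 <= j < n) e y (C (j.*2 + i.*2.-1)) = \sum_(0 <= j < n) e y (C j.*2.+1).
  rewrite -(@sum_periodic_shift (fun j => e y (C j.*2.+1)) n i.-1) => [|j].
    by apply: eq_bigr => j _; have -> : (j + i.-1).*2.+1 = j.*2 + i.*2.-1 by lia.
  by rewrite doubleD -addSn addnAC -N_eq cyc_addN.
move: cnt; rewrite !(count_cyc _ r) -big_split N_eq sum_pairs /=.
under eq_bigr do rewrite ex_odd ey_even addn0 add0n.
by rewrite big_split /= -shift_y -big_split.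
Qed.

Lemma M_cycle_through_oriented_M_path x y p i :
  M_path e m x y p -> [disjoint p & c] ->
  (forall k, e x (C k) -> ~~ odd k) -> (forall k, e y (C k) -> odd k) ->
  N./2 < count (e x) c + count (e y) c -> 0 < i <= N./2 ->
  exists c', [/\ M_cycle e m c', {subset c' <= p ++ c} & size c' = size p + 2 * i].
Proof.
move=> pP pc_disj x_even y_odd cnt /andP[i_gt0 le_in].
have [j _ /andP[e_xa e_yb]] := cyc_neighbours_at_odd_distance x_even y_odd cnt i_gt0.
set q := mkseq (fun s => C (j.*2 + (i.*2.-1 - s))) i.*2.
have qP : M_path e m (C (j.*2 + i.*2.-1)) (C j.*2) q.
  apply: M_path_cyc_segment; rewrite ?odd_double //.
  by rewrite -(leq_double i) in le_in; apply: leq_trans le_in _; rewrite halfK leq_subr.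
have q_c : {subset q <= c} by move=> _ /mapP[s _ ->]; apply: mem_cyc.
have pq_disj : [disjoint p & q] by apply: disjointWr pc_disj; apply/subsetP.
have [x_unmatched _] :=
  M_path_ends_unmatched m_sym m_partner pP (negbT (disjointFl pc_disj (mem_cyc (j.*2 + r)))).
exists (p ++ q); split.
- have pqP := M_path_cat m_sym m_partner pP qP pq_disj e_yb.
  apply: (M_cycle_of_M_path m_sym pqP); first by rewrite (e_sym (C j.*2)).
  by rewrite m_sym.
- by move=> z; rewrite !mem_cat => /orP[-> // | /q_c ->]; rewrite orbT.
- by rewrite size_cat size_mkseq mul2n.
Qed.

Lemma M_cycle_through_M_path x y p i :
  M_path e m x y p -> [disjoint p & c] ->
  N./2 < count (e x) c + count (e y) c -> 0 < i <= N./2 ->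
  exists c', [/\ M_cycle e m c', {subset c' <= p ++ c} & size c' = size p + 2 * i].
Proof.
move=> pP pc_disj cnt i_range.
have fy := M_path_end_colors f_proper pP.
have [fx | fx] := boolP (f x == f (cyc r)); last first.
  apply: (M_cycle_through_oriented_M_path pP) => // k /cyc_adj_parity ->.
    by rewrite fx.
  by move: fx; rewrite fy; case: (f x) (f (cyc r)) => [] [].
have rev_disj : [disjoint rev p & c] by rewrite (eq_disjoint (mem_rev p)).
have y_even k : e y (C k) -> ~~ odd k.
  by move/cyc_adj_parity ->; move: fx; rewrite fy; case: (f x) (f (cyc r)) => [] [].
have x_odd k : e x (C k) -> odd k by move/cyc_adj_parity ->.
rewrite addnC in cnt.
have [c' [c'M c'_sub c'_size]] := M_cycle_through_oriented_M_path
  (M_path_rev m_sym e_sym pP) rev_disj y_even x_odd cnt i_range.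
exists c'; split=> // [z /c'_sub | ]; last by rewrite c'_size size_rev.
by rewrite !mem_cat mem_rev.
Qed.

End Phase.

End MCycleEnumeration.

Theorem lemma1 (T : finType) (e m : rel T) (c p : seq T) (x y : T) :
  simple_graph e -> bipartite e -> matching e m ->
  M_cycle e m c -> M_path e m x y p ->
  [disjoint p & c] ->
  (size c)./2 < e_between2 e x y c ->
  forall i, 1 <= i <= (size c)./2 ->
  exists c' : seq T,
    [/\ M_cycle e m c', {subset c' <= p ++ c} & size c' = size p + 2 * i].
Proof.
move=> [e_sym _] [f f_proper] [m_sym _ m_partner] c_M pP pc_disj cnt i i_range.
have [r phase] := cyc_matching_phase x f_proper m_sym m_partner c_M.
exact: (M_cycle_through_M_path f_proper m_sym m_partner c_M e_sym phase pP).
Qed.
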